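(* Let $\mathcal{G}=(\mathcal{V}_A\cup\mathcal{V}_T,\mathcal{E},w)$ be a weighted bipartite graph with $|\mathcal{V}_A|\le|\mathcal{V}_T|$ that has at least one maximum matching (in the sense defined in the context). Let $e^*\in A(\mathcal{G})$ be a bottleneck edge of $\mathcal{G}$. Let $\mathcal{G}^-$ be the graph obtained from $\mathcal{G}$ by deleting both endpoints of $e^*$ together with all edges incident to them, and let $\mathcal{G}^+$ be the graph obtained from $\mathcal{G}$ by deleting only the edge $e^*$. Let $e^-\in A(\mathcal{G}^-)$ be a bottleneck edge of $\mathcal{G}^-$. Then $w_{e^-}\le w_{e^*}$. Moreover, if $\mathcal{G}^+$ has a bottleneck edge $e^+\in A(\mathcal{G}^+)$, then $w_{e^*}\le w_{e^+}$.
   Context: A weighted bipartite graph $\mathcal{G}=(\mathcal{V}_A\cup\mathcal{V}_T,\mathcal{E},w)$ has disjoint vertex sets $\mathcal{V}_A$ (agents) and $\mathcal{V}_T$ (tasks), edge set $\mathcal{E}\subseteq\mathcal{V}_A\times\mathcal{V}_T$, and real edge weights $w_e$, $e\in\mathcal{E}$. A matching is a set of pairwise non-adjacent edges (no two share a vertex). A maximum matching of such a graph is a matching in which every vertex of the agent side $\mathcal{V}_A$ is covered. For a graph $H$ having at least one maximum matching, its bottleneck value is $b(H)=\min_M \max_{e\in M} w_e$, the minimum over maximum matchings $M$ of $H$; a bottleneck edge of $H$ is an edge $e$ with $w_e=b(H)$ that belongs to some maximum matching $M$ of $H$ with $\max_{e'\in M}w_{e'}=b(H)$, and $A(H)$ denotes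 the set of bottleneck edges of $H$. (For $\mathcal{G}^-$ the agent side is $\mathcal{V}_A$ with the endpoint of $e^*$ removed; for $\mathcal{G}^+$ the vertex sets are unchanged.) *)

From mathcomp Require Import all_boot all_order all_algebra.
Set Implicit Arguments. Unset Strict Implicit. Unset Printing Implicit Defensive.
Import Order.TTheory GRing.Theory Num.Theory.
Local Open Scope ring_scope.

(* A weighted bipartite graph: agents VA : {set A}, tasks VT : {set T},
   edges E : {set A * T} with E \subset setX VA VT, weights w : A * T -> R. *)

Section Bip.
Variables (A T : finType) (R : realFieldType).

Definition is_matching (E M : {set A * T}) : Prop :=
  M \subset E /\
  (forall e1 e2, e1 \in M -> e2 \in M -> e1 != e2 ->
     e1.1 != e2.1 /\ e1.2 != e2.2).

(* maximum matching (paper's sense): a matching covering every agent of VA *)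
Definition is_max_matching (VA : {set A}) (E M : {set A * T}) : Prop :=
  is_matching E M /\ (forall a, a \in VA -> exists2 e, e \in M & e.1 = a).

Definition is_max_weight (w : A * T -> R) (M : {set A * T}) (b : R) : Prop :=
  (exists2 e, e \in M & w e = b) /\ (forall e, e \in M -> w e <= b).

Definition is_bottleneck_value (VA : {set A}) (E : {set A * T})
    (w : A * T -> R) (b : R) : Prop :=
  (exists2 M, is_max_matching VA E M & is_max_weight w M b) /\
  (forall M b', is_max_matching VA E M -> is_max_weight w M b' -> b <= b').

Definition is_bottleneck_edge (VA : {set A}) (E : {set A * T})
    (w : A * T -> R) (e : A * T) : Prop :=
  exists b, [/\ is_bottleneck_value VA E w b, w e = b &
    exists M, [/\ is_max_matching VA E M, e \in M & is_max_weight w M b]].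

End Bip.

From mathcomp Require Import all_boot all_order all_algebra.
Import Order.TTheory GRing.Theory Num.Theory.
Local Open Scope ring_scope.
Set Implicit Arguments. Unset Strict Implicit. Unset Printing Implicit Defensive.

(* Removing e* from a maximum matching of G that realises b(G) leaves a
   maximum matching of G^-, whose largest weight is at most b(G); hence
   b(G^-) <= b(G). Conversely, every maximum matching of G^+ is one of G, so
   b(G) <= b(G^+). *)

Section Bottleneck.
Variables (A T : finType) (R : realFieldType) (w : A * T -> R).

Lemma max_weight_exists (S : {set A * T}) e0 :
  e0 \in S -> exists b, is_max_weight w S b.
Proof.
move=> e0S; case: (arg_maxP w e0S) => e eS e_max.
by exists (w e); split; [exists e | move=> e' /e_max].
Qed.

Lemma max_weight_subset (S S' : {set A * T}) b b' :
  S' \subset S -> is_max_weight w S b -> is_max_weight w S' b' -> b' <= b.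
Proof.
move=> /subsetP sS'S [_ S_le] [[e eS' <-] _].
exact/S_le/sS'S.
Qed.

Lemma max_matching_nonempty (VA : {set A}) (E M : {set A * T}) a :
  is_max_matching VA E M -> a \in VA -> exists e, e \in M.
Proof. by move=> [_ cover] /cover [e eM _]; exists e. Qed.

Lemma max_matching_subset (VA : {set A}) (E E' M : {set A * T}) :
  E' \subset E -> is_max_matching VA E' M -> is_max_matching VA E M.
Proof.
move=> sE'E [[sME' disj] cover].
by split; first split; [apply: subset_trans sE'E | ..].
Qed.

Lemma max_matching_delete_edge (VA : {set A}) (E M : {set A * T}) es :
  is_max_matching VA E M -> es \in M ->
  is_max_matching (VA :\ es.1)
    [set e in E | (e.1 != es.1) && (e.2 != es.2)] (M :\ es).
Proof.
move=> [[sME disj] cover] esM; split; first split.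
- apply/subsetP => e; rewrite !inE => /andP [e_neq eM].
  have [-> ->] := disj _ _ eM esM e_neq.
  by rewrite (subsetP sME).
- by move=> e1 e2 /setD1P [_ e1M] /setD1P [_ e2M]; apply: disj.
- move=> a /setD1P [a_neq aVA].
  have [e eM e_a] := cover _ aVA.
  exists e => //; rewrite !inE eM andbT.
  by apply: contra_neq a_neq => e_es; rewrite -e_a e_es.
Qed.

Lemma bottleneck_edge_le (VA : {set A}) (E M : {set A * T}) e b :
  is_bottleneck_edge VA E w e ->
  is_max_matching VA E M -> is_max_weight w M b -> w e <= b.
Proof. by move=> [b0 [[_ b0_min] -> _]]; apply: b0_min. Qed.

Lemma bottleneck_edge_in_edges (VA : {set A}) (E : {set A * T}) e :
  is_bottleneck_edge VA E w e -> e \in E.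
Proof. by move=> [_ [_ _ [M [[[/subsetP sME _] _] eM _]]]]; apply: sME. Qed.

End Bottleneck.

Theorem lemma1 (A T : finType) (R : realFieldType)
  (VA : {set A}) (VT : {set T}) (E : {set A * T}) (w : A * T -> R)
  (HE : E \subset setX VA VT)
  (Hcard : (#|VA| <= #|VT|)%N)
  (Hmm : exists M, is_max_matching VA E M)
  (es : A * T) (Hes : is_bottleneck_edge VA E w es) :
  (* G^- : delete both endpoints of es and all incident edges *)
  (forall em, is_bottleneck_edge (VA :\ es.1)
                 [set e in E | (e.1 != es.1) && (e.2 != es.2)] w em ->
              w em <= w es) /\
  (* G^+ : delete only the edge es *)
  (forall ep, is_bottleneck_edge VA (E :\ es) w ep -> w es <= w ep).
Proof.
have [b [_ wes_b [Ms [Ms_max esMs Ms_b]]]] := Hes.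
split=> [em em_bn | ep [bp [_ -> [Mp [Mp_max _ Mp_bp]]]]].
- have Mm_max := max_matching_delete_edge Ms_max esMs.
  have emE := bottleneck_edge_in_edges em_bn.
  have em1_VA : em.1 \in VA :\ es.1.
    move: emE; rewrite !inE => /andP [emE /andP [em1 _]].
    by rewrite em1; move/subsetP/(_ _ emE): HE; rewrite inE => /andP [].
  have [e eMm] := max_matching_nonempty Mm_max em1_VA.
  have [bm Mm_bm] := max_weight_exists w eMm.
  apply: le_trans (bottleneck_edge_le em_bn Mm_max Mm_bm) _.
  by rewrite wes_b; apply: max_weight_subset (subD1set Ms es) Ms_b Mm_bm.
- exact: bottleneck_edge_le Hes (max_matching_subset (subD1set E es) Mp_max) Mp_bp.
Qed.
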